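(* For every $n\ge1$ and every optimal $n$-town $S$, $\max\{w(S),h(S)\}\le 2\sqrt{n}+5$.
   Context: An $n$-town is a set $S\subset\mathbb{Z}\times\mathbb{Z}$ of exactly $n$ distinct grid points; its cost is $c(S)=\frac12\sum_{s\in S}\sum_{t\in S}\|s-t\|_1$ (Manhattan distance), and it is optimal if its cost is minimum among all $n$-towns. For $i\in\mathbb{Z}$, the $i$-th column of $S$ is $C_i=\{(i,y)\in S\}$ and the $i$-th row is $R_i=\{(x,i)\in S\}$. The width of $S$ is $w(S)=\max_{i}|R_i|$ and the height is $h(S)=\max_{i}|C_i|$. *)

From mathcomp Require Import all_boot all_order all_algebra.
Set Implicit Arguments. Unset Strict Implicit. Unset Printing Implicit Defensive.
Import Order.TTheory GRing.Theory Num.Theory.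

Definition point := (int * int)%type.

Definition is_town (n : nat) (S : seq point) : Prop := uniq S /\ size S = n.

Definition l1dist (s t : point) : int := `|s.1 - t.1|%R + `|s.2 - t.2|%R.

Definition cost (S : seq point) : rat :=
  ((\sum_(s <- S) \sum_(t <- S) l1dist s t)%R)%:~R / 2%:R.

Definition optimal_town (n : nat) (S : seq point) : Prop :=
  is_town n S /\ forall T, is_town n T -> (cost S <= cost T)%R.

Definition column (S : seq point) (i : int) : seq point := [seq p <- S | p.1 == i].
Definition row (S : seq point) (i : int) : seq point := [seq p <- S | p.2 == i].

(* width = max_i |R_i| and height = max_i |C_i|; the max over all i in Z is
   attained at coordinates of points of S (other rows/columns are empty). *)
Definition width (S : seq point) : nat := \max_(p <- S) size (row S p.2).
Definition height (S : seq point) : nat := \max_(p <- S) size (column S p.1).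

(* An optimal town S is a sublevel set {q | D q <= M} of its potential
   D q = sum_(t in S) |q - t|_1: otherwise moving the point of S of largest
   potential to an empty site of smaller potential would lower the cost.  Since
   D q = f q.1 + g q.2 with f, g convex, the columns of S shrink away from the
   minimiser x0 of f, and a rectangle whose four corner values of f and g sum to
   at most 2M is at least half full: of two of its points symmetric about the
   centre, one lies in S.  Let [a, b] x [c, d] be the bounding box and n = |S|.
   The extreme points of S lie in the level set while the sites just below and
   above the box do not, which gives (b - a) n < 2 f x0 + (d - c + 2) n; the
   unimodal column sizes make x0 a median with 4 f x0 <= n (b - a + 2) (a
   discrete Chebyshev inequality).  Hence b - a < 2 (d - c) + 6.  The four
   quadrants of the box at (x0, y0) are half full, so (b - a) (d - c) <= 2 n + 2,
   and the two bounds give (b - a - 4)^2 <= 4 n.  The height follows by swapping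
   the coordinates. *)

From Pilot Require Import Defs.
From mathcomp Require Import all_boot all_order all_algebra.
From mathcomp Require Import zify.

Set Implicit Arguments. Unset Strict Implicit. Unset Printing Implicit Defensive.
Import Order.TTheory GRing.Theory Num.Theory.
Local Open Scope ring_scope.

Lemma seq_argmin (T : eqType) disp (R : orderType disp) (s : seq T) (phi : T -> R) :
  s != [::] -> exists2 x, x \in s & forall y, y \in s -> (phi x <= phi y)%O.
Proof.
elim: s => // x [_ _ | y s IH _]; first by exists x => [|_ /[!inE] /eqP ->]; rewrite ?inE.
have [z zs z_min] := IH isT.
have [xz|zx] := leP (phi x) (phi z).
  exists x => [|w /[!inE] /orP[/eqP -> // | /z_min]]; first exact: mem_head.
  exact: le_trans.
exists z => [|w /[!inE] /orP[/eqP -> | /z_min //]]; first by rewrite inE zs orbT.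
exact: ltW.
Qed.

Lemma seq_argmax (T : eqType) disp (R : orderType disp) (s : seq T) (phi : T -> R) :
  s != [::] -> exists2 x, x \in s & forall y, y \in s -> (phi y <= phi x)%O.
Proof. exact: (@seq_argmin T _ R^d). Qed.

Definition zrange (a : int) (k : nat) : seq int := [seq a + i%:Z | i <- iota 0 k].

Lemma mem_zrange a k x : (x \in zrange a k) = (a <= x < a + k%:Z).
Proof.
apply/mapP/idP => [[i /[!mem_iota] /andP[_ ik] ->]|axk]; first lia.
by exists `|x - a|%N; [rewrite mem_iota|]; lia.
Qed.

Lemma zrange_uniq a k : uniq (zrange a k).
Proof. by rewrite map_inj_uniq ?iota_uniq // => i j /addrI []. Qed.

Lemma size_zrange a k : size (zrange a k) = k.
Proof. by rewrite size_map size_iota. Qed.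

Lemma sum_zrange (V : nmodType) a k (F : int -> V) :
  \sum_(x <- zrange a k) F x = \sum_(0 <= i < k) F (a + i%:Z).
Proof. by rewrite big_map /index_iota subn0. Qed.

Lemma sum_count_mem (T : eqType) (V : nmodType) (r s : seq T) (F : T -> V) :
  uniq r -> {subset s <= r} ->
  \sum_(u <- s) F u = \sum_(x <- r) F x *+ count_mem x s.
Proof.
move=> r_uniq; elim: s => [_|u s IH /allP /= /andP[ur /allP sr]].
  by rewrite big_nil big1.
rewrite big_cons IH // (bigD1_seq u) //= [in RHS](bigD1_seq u) //= eqxx mulrS addrA.
congr (_ + _); apply: eq_bigr => x /negbTE xu; by rewrite eq_sym xu.
Qed.

Lemma sumr_const_seq (T : Type) (V : nmodType) (r : seq T) (x : V) :
  \sum_(i <- r) x = x *+ size r.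
Proof. by rewrite big_const_seq count_predT iter_addr_0. Qed.

Definition zconvex (f : int -> int) :=
  forall u x v : int, u <= x <= v -> f x + f (u + v - x) <= f u + f v.

Definition absdev (s : seq int) (x : int) : int := \sum_(u <- s) `|x - u|.

Lemma absdev_ge0 s x : 0 <= absdev s x.
Proof. exact: sumr_ge0. Qed.

Lemma absdev_convex s : zconvex (absdev s).
Proof.
move=> u x v /andP[ux xv]; rewrite /absdev -!big_split /=.
by apply: ler_sum => t _; lia.
Qed.

Lemma absdev_endpoints s (a b : int) : {in s, forall u : int, a <= u <= b} ->
  absdev s a + absdev s b = (b - a) * (size s)%:Z.
Proof.
move=> s_ab; rewrite /absdev -big_split (eq_big_seq (fun=> b - a)) /=.
  by rewrite sumr_const_seq -mulr_natr natz.
by move=> u /s_ab; lia.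
Qed.

Lemma absdev_below s (c : int) :
  {in s, forall u : int, c <= u} -> absdev s (c - 1) = absdev s c + (size s)%:Z.
Proof.
move=> s_c; rewrite /absdev (eq_big_seq (fun u => `|c - u| + 1)) => [|u /s_c]; last lia.
by rewrite big_split sumr_const_seq /= -mulr_natr natz mul1r.
Qed.

Lemma absdev_above s (d : int) :
  {in s, forall u : int, u <= d} -> absdev s (d + 1) = absdev s d + (size s)%:Z.
Proof.
move=> s_d; rewrite /absdev (eq_big_seq (fun u => `|d - u| + 1)) => [|u /s_d]; last lia.
by rewrite big_split sumr_const_seq /= -mulr_natr natz mul1r.
Qed.

Lemma zconvex_between (f : int -> int) (a b x0 x x' : int) : zconvex f ->
  (forall y : int, a <= y <= b -> f x0 <= f y) -> a <= x0 <= b -> a <= x' <= b ->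
  (x0 <= x <= x') || (x' <= x <= x0) -> f x <= f x'.
Proof.
move=> f_cvx x0_min x0_ab x'_ab /orP[] x_mid.
  have := f_cvx x0 x x' x_mid; have := x0_min (x0 + x' - x); lia.
have := f_cvx x' x x0 x_mid; have := x0_min (x' + x0 - x); lia.
Qed.

Lemma sum_split_around (V : nmodType) (F : int -> V) (a : int) (A B : nat) :
  \sum_(0 <= i < (A + B).+1) F (a + i%:Z) =
  \sum_(0 <= k < A) F (a + A%:Z - 1 - k%:Z) + F (a + A%:Z) +
  \sum_(0 <= k < B) F (a + A%:Z + 1 + k%:Z).
Proof.
rewrite (@big_cat_nat _ _ _ A 0 (A + B).+1) //; last by rewrite leqW ?leq_addr.
rewrite (@big_ltn _ _ _ A) ?ltnS ?leq_addr // (@big_addn _ _ _ 0 _ A.+1) big_nat_rev /=.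
rewrite addrA subSS addKn; congr (_ + _ + _); apply: eq_big_nat => k /andP[_ kB]; congr F; lia.
Qed.

Lemma chebyshev_nonincreasing (c : nat -> int) (B : nat) :
  (forall k k', (k <= k')%N -> (k' < B)%N -> c k' <= c k) ->
  2 * \sum_(0 <= k < B) (k.+1)%:Z * c k <= (B.+1)%:Z * \sum_(0 <= k < B) c k.
Proof.
move=> c_noninc; rewrite !mulr_sumr -subr_ge0 -sumrB.
set E := \sum_(0 <= k < B) _.
have E_rev : E = \sum_(0 <= k < B)
    ((B.+1)%:Z * c (B - k.+1)%N - 2 * ((B - k)%N%:Z * c (B - k.+1)%N)).
  rewrite /E big_nat_rev; apply: eq_big_nat => k /andP[_ kB].
  by rewrite add0n; congr (_ - 2 * (_ * _)); lia.
suff : 0 <= E + E by lia.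
rewrite {2}E_rev -big_split /= big_nat_cond; apply: sumr_ge0 => k /andP[/andP[_ kB] _].
(* pairing [k] with [B - 1 - k], the summand is [(B - 1 - 2k) (c k - c (B - 1 - k)) >= 0] *)
have kB' : (B - k.+1 < B)%N by lia.
case: (leqP k (B - k.+1)) => kk'.
  by have := c_noninc k (B - k.+1)%N kk' kB'; nia.
by have := c_noninc (B - k.+1)%N k (ltnW kk') kB; nia.
Qed.

Section UnimodalDeviation.

Variables (s : seq int) (x0 : int) (A B : nat).
Hypothesis s_range : {in s, forall u : int, x0 - A%:Z <= u <= x0 + B%:Z}.

Let m x := (count_mem x s)%:Z.
Let left_mass := \sum_(0 <= k < A) m (x0 - 1 - k%:Z).
Let right_mass := \sum_(0 <= k < B) m (x0 + 1 + k%:Z).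

Lemma sum_around (F : int -> int) :
  \sum_(u <- s) F u =
  \sum_(0 <= k < A) m (x0 - 1 - k%:Z) * F (x0 - 1 - k%:Z) + m x0 * F x0 +
  \sum_(0 <= k < B) m (x0 + 1 + k%:Z) * F (x0 + 1 + k%:Z).
Proof.
rewrite (sum_count_mem _ (zrange_uniq (x0 - A%:Z) (A + B).+1)); last first.
  by move=> u /s_range; rewrite mem_zrange; lia.
under eq_bigr => x _ do rewrite -mulr_natl natz.
rewrite sum_zrange (sum_split_around (fun x => m x * F x)) subrK.
by congr (_ + _ + _); apply: eq_big_nat => k _; congr (m _ * F _); lia.
Qed.

Lemma size_around : (size s)%:Z = left_mass + m x0 + right_mass.
Proof.
rewrite -natz -sumr_const_seq (sum_around (fun=> 1)) mulr1.
by congr (_ + _ + _); apply: eq_bigr => k _; rewrite mulr1.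
Qed.

Lemma absdev_around : absdev s x0 =
  \sum_(0 <= k < A) (k.+1)%:Z * m (x0 - 1 - k%:Z) +
  \sum_(0 <= k < B) (k.+1)%:Z * m (x0 + 1 + k%:Z).
Proof.
rewrite /absdev sum_around subrr normr0 mulr0 addr0.
by congr (_ + _); apply: eq_big_nat => k _; lia.
Qed.

Lemma absdev_succ_around : absdev s (x0 + 1) - absdev s x0 = left_mass + m x0 - right_mass.
Proof.
rewrite /absdev -sumrB sum_around /left_mass /right_mass -sumrN.
congr (_ + _ + _); first (apply: eq_big_nat => k _); last (apply: eq_big_nat => k _).
- by rewrite -[RHS]mulr1; congr (_ * _); lia.
- by rewrite -[RHS]mulr1; congr (_ * _); lia.
- by rewrite -[RHS]mulrN1; congr (_ * _); lia.
Qed.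

Lemma absdev_pred_around : absdev s (x0 - 1) - absdev s x0 = - left_mass + m x0 + right_mass.
Proof.
rewrite /absdev -sumrB sum_around /left_mass /right_mass -sumrN.
congr (_ + _ + _); first (apply: eq_big_nat => k _); last (apply: eq_big_nat => k _).
- by rewrite -[RHS]mulrN1; congr (_ * _); lia.
- by rewrite -[RHS]mulr1; congr (_ * _); lia.
- by rewrite -[RHS]mulr1; congr (_ * _); lia.
Qed.

Lemma absdev_unimodal_bound :
  (forall x : int, x0 - A%:Z <= x <= x0 + B%:Z -> absdev s x0 <= absdev s x) ->
  (forall x x' : int, x0 - A%:Z <= x' <= x0 + B%:Z ->
     (x0 <= x <= x') || (x' <= x <= x0) -> m x' <= m x) ->
  4 * absdev s x0 <= (size s)%:Z * (A + B + 2)%:Z.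
Proof.
move=> x0_min m_unimodal.
have left_ge0 : 0 <= left_mass by apply: sumr_ge0.
have right_ge0 : 0 <= right_mass by apply: sumr_ge0.
(* minimality of [absdev s] at [x0 + 1] and [x0 - 1] makes [x0] a median *)
have right_le : right_mass <= left_mass + m x0.
  have [B0|B_gt0] := posnP B; first by rewrite /right_mass B0 big_geq // addr_ge0.
  have : absdev s x0 <= absdev s (x0 + 1) by apply: x0_min; lia.
  by rewrite -subr_ge0 absdev_succ_around; lia.
have left_le : left_mass <= right_mass + m x0.
  have [A0|A_gt0] := posnP A; first by rewrite /left_mass A0 big_geq // addr_ge0.
  have : absdev s x0 <= absdev s (x0 - 1) by apply: x0_min; lia.
  by rewrite -subr_ge0 absdev_pred_around; lia.
have cheb_left := @chebyshev_nonincreasing (fun k => m (x0 - 1 - k%:Z)) A.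
have cheb_right := @chebyshev_nonincreasing (fun k => m (x0 + 1 + k%:Z)) B.
have {}cheb_left : 2 * \sum_(0 <= k < A) (k.+1)%:Z * m (x0 - 1 - k%:Z) <= (A.+1)%:Z * left_mass.
  by apply: cheb_left => k k' kk' k'A; apply: m_unimodal; lia.
have {}cheb_right : 2 * \sum_(0 <= k < B) (k.+1)%:Z * m (x0 + 1 + k%:Z) <= (B.+1)%:Z * right_mass.
  by apply: cheb_right => k k' kk' k'B; apply: m_unimodal; lia.
rewrite absdev_around size_around; move: cheb_left cheb_right.
have : 0 <= m x0 by [].
set wl := \sum_(0 <= k < A) _; set wr := \sum_(0 <= k < B) _.
nia.
Qed.

End UnimodalDeviation.

Lemma count_mem_sym (T : eqType) (s1 s2 : seq T) :
  uniq s1 -> uniq s2 -> count (mem s1) s2 = count (mem s2) s1.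
Proof.
move=> s1_uniq s2_uniq; rewrite -!size_filter; apply/perm_size/uniq_perm.
- exact: filter_uniq.
- exact: filter_uniq.
- by move=> x; rewrite !mem_filter andbC.
Qed.

Definition in_rect (x1 x2 y1 y2 : int) : pred point :=
  fun q => (x1 <= q.1 <= x2) && (y1 <= q.2 <= y2).

Section ConvexLevelSet.

Variables (f g : int -> int) (M : int) (S : seq point).
Hypotheses (f_convex : zconvex f) (g_convex : zconvex g) (S_uniq : uniq S).
Hypothesis S_level : forall q : point, (q \in S) = (f q.1 + g q.2 <= M).

Lemma column_size_le (x x' : int) : f x <= f x' -> (size (column S x') <= size (column S x))%N.
Proof.
move=> f_xx'; rewrite -(size_map (fun q : point => (x, q.2))).
apply: uniq_leq_size => [|p /mapP[q]].
  rewrite map_inj_in_uniq ?filter_uniq // => -[p1 p2] [q1 q2].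
  by rewrite !mem_filter /= => /andP[/eqP -> _] /andP[/eqP -> _] [->].
rewrite mem_filter => /andP[/eqP q1 qS] ->.
by rewrite mem_filter /= eqxx S_level /=; rewrite S_level q1 in qS; lia.
Qed.

Lemma rect_half_full (x1 x2 y1 y2 : int) :
  x1 <= x2 -> y1 <= y2 -> f x1 + f x2 + g y1 + g y2 <= 2 * M ->
  (x2 - x1 + 1) * (y2 - y1 + 1) <= 2 * (count (in_rect x1 x2 y1 y2) S)%:Z.
Proof.
move=> x12 y12 corners.
set grid := [seq (x, y) | x <- zrange x1 `|x2 - x1|.+1, y <- zrange y1 `|y2 - y1|.+1].
have mem_grid q : (q \in grid) = in_rect x1 x2 y1 y2 q.
  apply/allpairsP/idP => [[[x y] [/= + + ->]]|/andP[qx qy]].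
    by rewrite /in_rect !mem_zrange /=; lia.
  by exists q; rewrite !mem_zrange; case: q qx qy => x y /= qx qy; split => //; lia.
have grid_uniq : uniq grid.
  by apply: allpairs_uniq; rewrite ?zrange_uniq // => -[? ?] [? ?].
pose refl (q : point) : point := (x1 + x2 - q.1, y1 + y2 - q.2).
have refl_inj : injective refl by move=> -[a b] [c d] [ac bd]; congr pair; lia.
have refl_grid : perm_eq (map refl grid) grid.
  apply: (uniq_perm _ grid_uniq) => [|q]; first by rewrite (map_inj_uniq refl_inj).
  apply/mapP/idP => [[p + ->]|qg]; first by rewrite !mem_grid /in_rect /=; lia.
  exists (refl q); last by case: q {qg} => x y; congr pair; rewrite /=; lia.
  by move: qg; rewrite !mem_grid /in_rect /=; lia.
have grid_covered : all [predU mem S & preim refl (mem S)] grid.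
  apply/allP => -[x y]; rewrite mem_grid /in_rect /= => /andP[xx yy].
  rewrite !inE !S_level /=.
  have := f_convex xx; have := g_convex yy.
  by case: (lerP (f x + g y) M) => //= xy_out; lia.
have refl_count : count (preim refl (mem S)) grid = count (mem S) grid.
  by rewrite -count_map (permP refl_grid).
have S_count : count (mem S) grid = count (in_rect x1 x2 y1 y2) S.
  by rewrite count_mem_sym //; apply: eq_count.
have := count_predUI (mem S) (preim refl (mem S)) grid.
move: grid_covered; rewrite all_count refl_count S_count => /eqP ->.
rewrite size_allpairs !size_zrange; nia.
Qed.

End ConvexLevelSet.

Lemma l1distC s t : l1dist s t = l1dist t s.
Proof. rewrite /l1dist; lia. Qed.

Lemma l1distxx s : l1dist s s = 0.
Proof. rewrite /l1dist; lia. Qed.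

Lemma l1dist_gt0 s t : s != t -> 0 < l1dist s t.
Proof.
case: s t => [s1 s2] [t1 t2]; rewrite /l1dist xpair_eqE negb_and.
by case/orP => /eqP st /=; lia.
Qed.

Definition dist_sum (S : seq point) (q : point) : int := \sum_(t <- S) l1dist q t.

Definition pair_sum (S : seq point) : int := \sum_(s <- S) dist_sum S s.

Lemma dist_sum_dev S q : dist_sum S q = absdev (map fst S) q.1 + absdev (map snd S) q.2.
Proof. by rewrite /dist_sum /absdev !big_map -big_split. Qed.

Lemma pair_sum_cons p S : pair_sum (p :: S) = 2 * dist_sum S p + pair_sum S.
Proof.
rewrite /pair_sum /dist_sum !big_cons l1distxx add0r.
under [X in _ + X = _]eq_bigr => s _ do rewrite big_cons l1distC.
by rewrite [X in _ + X = _]big_split /= addrA -mulr2n mulr_natl.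
Qed.

Lemma pair_sum_perm S T : perm_eq S T -> pair_sum S = pair_sum T.
Proof.
move=> ST; rewrite /pair_sum (perm_big _ ST); apply: eq_bigr => s _.
exact: perm_big.
Qed.

Lemma cost_pair_sum S : cost S = (pair_sum S)%:~R / 2%:R.
Proof. by []. Qed.

Lemma optimal_town_exchange n S p q : optimal_town n S -> p \in S -> q \notin S ->
  dist_sum S p < dist_sum S q.
Proof.
move=> [[S_uniq S_size] S_opt] pS qS.
have S_rem := perm_to_rem pS.
have qS' : q \notin rem p S by apply: contra qS; apply: mem_rem.
have : is_town n (q :: rem p S).
  split; first by rewrite /= qS' rem_uniq.
  by rewrite /= size_rem // prednK // lt0n size_eq0; apply: contraTneq pS => ->.
move/S_opt; rewrite !cost_pair_sum ler_pM2r ?invr_gt0 ?ltr0n // ler_int.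
rewrite (pair_sum_perm S_rem) !pair_sum_cons lerD2r ler_pM2l // => le_pq.
have split_p x : dist_sum S x = l1dist x p + dist_sum (rem p S) x.
  by rewrite /dist_sum (perm_big _ S_rem) big_cons.
have : 0 < l1dist q p by apply: l1dist_gt0; apply: contraNneq qS => ->.
by rewrite !split_p l1distxx; lia.
Qed.

Lemma optimal_town_level n S : optimal_town n S -> S != [::] ->
  exists M, forall q, (q \in S) = (dist_sum S q <= M).
Proof.
move=> S_opt /(seq_argmax (dist_sum S))[p pS p_max].
exists (dist_sum S p) => q; apply/idP/idP => [/p_max // | q_le].
apply/negPn/negP => qS; have := optimal_town_exchange S_opt pS qS; lia.
Qed.

Lemma uniq_size_le_range (s : seq int) (a b : int) :
  uniq s -> {in s, forall u, a <= u <= b} -> (size s <= `|b - a|.+1)%N.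
Proof.
move=> s_uniq s_ab; rewrite -(size_zrange a `|b - a|.+1).
by apply: uniq_leq_size => // u /s_ab; rewrite mem_zrange; lia.
Qed.

Lemma size_row_le (S : seq point) (a b y : int) :
  uniq S -> {in S, forall t : point, a <= t.1 <= b} -> (size (Defs.row S y) <= `|b - a|.+1)%N.
Proof.
move=> S_uniq S_ab; rewrite -(size_map fst); apply: uniq_size_le_range.
  rewrite map_inj_in_uniq ?filter_uniq // => -[p1 p2] [q1 q2].
  by rewrite !mem_filter /= => /andP[/eqP -> _] /andP[/eqP -> _] ->.
by move=> _ /mapP[t /[!mem_filter] /andP[_ /S_ab tab] ->].
Qed.

Lemma size_column_le (S : seq point) (c d x : int) :
  uniq S -> {in S, forall t : point, c <= t.2 <= d} -> (size (column S x) <= `|d - c|.+1)%N.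
Proof.
move=> S_uniq S_cd; rewrite -(size_map snd); apply: uniq_size_le_range.
  rewrite map_inj_in_uniq ?filter_uniq // => -[p1 p2] [q1 q2].
  by rewrite !mem_filter /= => /andP[/eqP -> _] /andP[/eqP -> _] ->.
by move=> _ /mapP[t /[!mem_filter] /andP[_ /S_cd tcd] ->].
Qed.

Lemma width_le (S : seq point) (a b : int) :
  uniq S -> {in S, forall t : point, a <= t.1 <= b} -> (width S <= `|b - a|.+1)%N.
Proof. by move=> S_uniq S_ab; apply/bigmax_leqP_seq => p _ _; apply: size_row_le. Qed.

Lemma quadrant_count_le (s : seq point) (a b c d x0 y0 : int) :
  {in s, forall t : point, a <= t.1 <= b /\ c <= t.2 <= d} ->
  a <= x0 <= b -> c <= y0 <= d ->
  (count (in_rect a x0 c y0) s + count (in_rect x0 b c y0) s +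
   count (in_rect a x0 y0 d) s + count (in_rect x0 b y0 d) s <=
   size s + size (column s x0) + size (Defs.row s y0) + count_mem (x0, y0) s)%N.
Proof.
rewrite /column /Defs.row !size_filter.
move=> + x0_ab y0_cd; elim: s => //= -[x y] s IH s_box.
have := IH (sub_in1 (@mem_behead _ (_ :: s)) s_box).
have [] := s_box _ (mem_head _ _); rewrite /in_rect /= xpair_eqE.
lia.
Qed.

Lemma balanced_area_sq (X Y n : int) :
  5 <= X -> 1 <= n -> X < 2 * Y + 6 -> X * Y - 2 <= 2 * n -> (X - 4) ^+ 2 <= 4 * n.
Proof.
move=> X_ge5 n_ge1 balance area.
rewrite expr2; have [X_le6|X_ge7] := lerP X 6; first nia.
have : X * (X - 5) <= X * (2 * Y) by rewrite ler_wpM2l; lia.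
lia.
Qed.

Section BoundingBox.

Variables (S : seq point) (M a b c d x0 y0 : int).

Let f := absdev (map fst S).
Let g := absdev (map snd S).

Hypothesis S_uniq : uniq S.
Hypothesis S_level : forall q : point, (q \in S) = (f q.1 + g q.2 <= M).
Hypothesis S_box : {in S, forall t : point, a <= t.1 <= b /\ c <= t.2 <= d}.
Hypothesis a_attained : exists2 t : point, t \in S & t.1 = a.
Hypothesis b_attained : exists2 t : point, t \in S & t.1 = b.
Hypothesis c_attained : exists2 t : point, t \in S & t.2 = c.
Hypothesis d_attained : exists2 t : point, t \in S & t.2 = d.
Hypotheses (x0_ab : a <= x0 <= b) (y0_cd : c <= y0 <= d).
Hypothesis x0_min : forall x : int, a <= x <= b -> f x0 <= f x.
Hypothesis y0_min : forall y : int, c <= y <= d -> g y0 <= g y.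

Lemma level_row_min (t : point) : t \in S -> f t.1 + g y0 <= M.
Proof.
by move=> tS; have [_ /y0_min] := S_box tS; move: tS; rewrite S_level; lia.
Qed.

Lemma level_column_min (t : point) : t \in S -> f x0 + g t.2 <= M.
Proof.
by move=> tS; have [/x0_min] := S_box tS; move: tS; rewrite S_level; lia.
Qed.

Lemma fst_range : {in map fst S, forall x : int, a <= x <= b}.
Proof. by move=> _ /mapP[t /S_box[tx _] ->]. Qed.

Lemma snd_range : {in map snd S, forall y : int, c <= y <= d}.
Proof. by move=> _ /mapP[t /S_box[_ ty] ->]. Qed.

Lemma level_below_box : M < f x0 + g c + (size S)%:Z.
Proof.
have : (x0, c - 1) \notin S by apply/negP => /S_box /= []; lia.
rewrite S_level -ltNge /= /g absdev_below ?(@size_map point) ?addrA // => y /snd_range; lia.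
Qed.

Lemma level_above_box : M < f x0 + g d + (size S)%:Z.
Proof.
have : (x0, d + 1) \notin S by apply/negP => /S_box /= []; lia.
rewrite S_level -ltNge /= /g absdev_above ?(@size_map point) ?addrA // => y /snd_range; lia.
Qed.

Lemma count_mem_fst (x : int) : count_mem x (map fst S) = size (column S x).
Proof. by rewrite count_map size_filter. Qed.

Lemma x0_mean_deviation : 4 * f x0 <= (size S)%:Z * (b - a + 2).
Proof.
have := @absdev_unimodal_bound (map fst S) x0 `|x0 - a| `|b - x0|.
rewrite size_map -/f; have -> : (`|x0 - a| + `|b - x0| + 2)%N%:Z = b - a + 2 by lia.
apply=> [x /fst_range| x | x x' x'_ab x_mid]; try lia.
  by move=> x_ab; apply: x0_min; lia.
rewrite !count_mem_fst lez_nat; apply: (column_size_le (g := g) (M := M)) => //.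
apply: (zconvex_between (absdev_convex _) x0_min) => //; lia.
Qed.

Lemma size_gt0 : (0 < size S)%N.
Proof. by have [t + _] := a_attained; case: (S). Qed.

Lemma box_sides_in_level :
  [/\ f a + g y0 <= M, f b + g y0 <= M, f x0 + g c <= M & f x0 + g d <= M].
Proof.
have [ta /level_row_min + <-] := a_attained; have [tb /level_row_min + <-] := b_attained.
have [tc /level_column_min + <-] := c_attained; have [td /level_column_min + <-] := d_attained.
by split.
Qed.

Lemma box_balance : b - a < 2 * (d - c) + 6.
Proof.
have [fa fb gc gd] := box_sides_in_level.
have := level_below_box; have := level_above_box; have := x0_mean_deviation.
have := absdev_endpoints fst_range; have := absdev_endpoints snd_range.
have := absdev_ge0 (map snd S) y0; rewrite !(@size_map point) -/f -/g => *.
suff : (b - a) * (size S)%:Z < (2 * (d - c) + 6) * (size S)%:Z.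
  by rewrite ltr_pM2r // ltz_nat size_gt0.
lia.
Qed.

Lemma box_area : (b - a) * (d - c) - 2 <= 2 * (size S)%:Z.
Proof.
have [fa fb gc gd] := box_sides_in_level.
have half_full := rect_half_full (absdev_convex _) (absdev_convex _) S_uniq S_level.
rewrite -/f -/g in half_full.
have q1 := half_full a x0 c y0; have q2 := half_full x0 b c y0.
have q3 := half_full a x0 y0 d; have q4 := half_full x0 b y0 d.
have overlap := quadrant_count_le S_box x0_ab y0_cd.
have col := size_column_le x0 S_uniq (fun t tS => (S_box tS).2).
have row := size_row_le y0 S_uniq (fun t tS => (S_box tS).1).
have center : (count_mem (x0, y0) S <= 1)%N by rewrite count_uniq_mem ?leq_b1.
have {}q1 : (x0 - a + 1) * (y0 - c + 1) <= 2 * (count (in_rect a x0 c y0) S)%:Z.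
  by apply: q1; lia.
have {}q2 : (b - x0 + 1) * (y0 - c + 1) <= 2 * (count (in_rect x0 b c y0) S)%:Z.
  by apply: q2; lia.
have {}q3 : (x0 - a + 1) * (d - y0 + 1) <= 2 * (count (in_rect a x0 y0 d) S)%:Z.
  by apply: q3; lia.
have {}q4 : (b - x0 + 1) * (d - y0 + 1) <= 2 * (count (in_rect x0 b y0 d) S)%:Z.
  by apply: q4; lia.
lia.
Qed.

Lemma box_width_bound : exists k : nat, (width S <= k + 5)%N /\ (k * k <= 4 * size S)%N.
Proof.
have W_le := width_le S_uniq (fun t tS => (S_box tS).1).
have area := box_area; have balance := box_balance; have n_gt0 := size_gt0.
have [ba_le4|ba_gt4] := lerP (b - a) 4; first by exists 0%N; lia.
exists (`|b - a| - 4)%N; split; first lia.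
have := @balanced_area_sq (b - a) (d - c) (size S)%:Z; rewrite -lez_nat !PoszM expr2.
lia.
Qed.

End BoundingBox.

Lemma optimal_town_width n S : (1 <= n)%N -> optimal_town n S ->
  exists k : nat, (width S <= k + 5)%N /\ (k * k <= 4 * n)%N.
Proof.
move=> n_gt0 S_opt; have [[S_uniq S_size] _] := S_opt; rewrite -S_size in n_gt0 *.
have S_nil : S != [::] by rewrite -size_eq0 -lt0n.
have [M S_level] := optimal_town_level S_opt S_nil.
have [ta taS ta_min] := seq_argmin (fun t : point => t.1) S_nil.
have [tb tbS tb_max] := seq_argmax (fun t : point => t.1) S_nil.
have [tc tcS tc_min] := seq_argmin (fun t : point => t.2) S_nil.
have [td tdS td_max] := seq_argmax (fun t : point => t.2) S_nil.
have S_box : {in S, forall t : point, ta.1 <= t.1 <= tb.1 /\ tc.2 <= t.2 <= td.2}.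
  move=> t tS; split; apply/andP; split.
  - exact: ta_min.
  - exact: tb_max.
  - exact: tc_min.
  - exact: td_max.
have [x0 + x0_min] := seq_argmin (absdev (map fst S)) (isT : zrange ta.1 `|tb.1 - ta.1|.+1 != [::]).
rewrite mem_zrange => x0_ab.
have [y0 + y0_min] := seq_argmin (absdev (map snd S)) (isT : zrange tc.2 `|td.2 - tc.2|.+1 != [::]).
rewrite mem_zrange => y0_cd.
apply: (@box_width_bound S M ta.1 tb.1 tc.2 td.2 x0 y0) => //.
- by move=> q; rewrite S_level dist_sum_dev.
- by exists ta.
- by exists tb.
- by exists tc.
- by exists td.
- have := S_box _ taS; lia.
- have := S_box _ tcS; lia.
- by move=> x x_ab; apply: x0_min; rewrite mem_zrange; lia.
- by move=> y y_cd; apply: y0_min; rewrite mem_zrange; lia.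
Qed.

Lemma cost_swap S : cost (map swap_pair S) = cost S.
Proof.
rewrite /cost !big_map; congr (_%:~R / _); apply: eq_bigr => s _.
by rewrite big_map; apply: eq_bigr => t _; rewrite /l1dist addrC.
Qed.

Lemma is_town_swap n S : is_town n S -> is_town n (map swap_pair S).
Proof.
case=> S_uniq S_size; rewrite /is_town map_inj_uniq ?size_map //.
exact: can_inj swap_pairK.
Qed.

Lemma optimal_town_swap n S : optimal_town n S -> optimal_town n (map swap_pair S).
Proof.
case=> S_town S_opt; split=> [|T T_town]; first exact: is_town_swap.
by rewrite cost_swap -(mapK swap_pairK T) cost_swap; apply/S_opt/is_town_swap.
Qed.

Lemma width_swap S : width (map swap_pair S) = height S.
Proof.
rewrite /width /height big_map; apply: eq_bigr => p _.
by rewrite /Defs.row /column filter_map size_map.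
Qed.

Local Close Scope ring_scope.
From Stdlib Require Import Reals Lra.

Lemma INR_le_sqrt_bound (w n k : nat) : (w <= k + 5)%N -> (k * k <= 4 * n)%N ->
  (INR w <= 2 * sqrt (INR n) + 5)%R.
Proof.
move=> /ssrnat.leP/le_INR + /ssrnat.leP/le_INR.
rewrite plus_INR !mult_INR /= => w_le k2_le.
suff : (INR k <= 2 * sqrt (INR n))%R by lra.
apply: Rsqr_incr_0_var; last by apply: Rmult_le_pos; [lra | apply: sqrt_pos].
rewrite Rsqr_mult Rsqr_sqrt ?pos_INR /Rsqr; nra.
Qed.

Theorem lemma5 (n : nat) (S : seq point) :
  (1 <= n)%N -> optimal_town n S ->
  (INR (maxn (width S) (height S)) <= 2 * sqrt (INR n) + 5)%R.
Proof.
move=> n_gt0 S_opt.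
have bound T : optimal_town n T -> (INR (width T) <= 2 * sqrt (INR n) + 5)%R.
  by move=> /(optimal_town_width n_gt0)[k [w_le k_le]]; exact: INR_le_sqrt_bound w_le k_le.
case: leqP => _; last exact: bound.
by rewrite -width_swap; apply/bound/optimal_town_swap.
Qed.
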